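(* Let $w_1,w_2,v_1,v_2\in\Sigma^*$ such that $\mathsf{Facs}(w_1)\cap\mathsf{Facs}(w_2)=\mathsf{Facs}(v_1)\cap\mathsf{Facs}(v_2)$, and let $r=\max\{|u| : u\in\mathsf{Facs}(w_1)\cap\mathsf{Facs}(w_2)\}$. If $w_1\equiv_{k+r+2} v_1$ and $w_2\equiv_{k+r+2} v_2$ for some $k\in\mathbb{N}$ with $k\ge 1$, then $w_1\cdot w_2\equiv_k v_1\cdot v_2$.
   Context: $\Sigma$ is a fixed finite alphabet. For $w \in \Sigma^*$, $\mathsf{Facs}(w)$ is the set of all factors (contiguous subwords, including $\varepsilon$ and $w$) of $w$. The structure $\mathfrak{A}_w$ representing $w$ has universe $\mathsf{Facs}(w)\cup\{\perp\}$, a ternary relation $R_\circ=\{(x,y,z)\in\mathsf{Facs}(w)^3 : x=y\cdot z\}$, for each letter $\mathtt{a}\in\Sigma$ a constant interpreted as $\mathtt{a}$ if $\mathtt{a}$ occurs in $w$ and as $\perp$ otherwise, and a constant $\varepsilon$ interpreted as the empty word. The $k$-round Ehrenfeucht–Fraïssé game on $\mathfrak{A}_w,\mathfrak{A}_v$: in each round $i$, Spoiler picks one of the two structures and an element of its universe, Duplicator answers with an element of the other structure's universe; let $a_i$ (in $\mathfrak{A}_w$) and $b_i$ (in $\mathfrak{A}_v$) be the chosen elements. Duplicator wins if the tuples $(a_1,\dots,a_k,\vec c^{\,\mathfrak{A}_w})$ and $(b_1,\dots,b_k,\vec c^{\,\mathfrak{A}_v})$, where $\vec c$ lists the interpretations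 of all constants, form a partial isomorphism: for all indices $i,j,l$, $a_i$ equals the interpretation of a constant $c$ iff $b_i$ equals the interpretation of $c$; $a_i=a_j$ iff $b_i=b_j$; and $a_i=a_j\cdot a_l$ iff $b_i=b_j\cdot b_l$. We write $w\equiv_k v$ if Duplicator has a winning strategy in the $k$-round game. *)

From mathcomp Require Import all_boot.
Set Implicit Arguments. Unset Strict Implicit. Unset Printing Implicit Defensive.

Section FactorStructures.
Variable Sigma : finType.
Notation word := (seq Sigma).

(* Elements of the universe of A_w: [None] is bottom, [Some u] is a word. *)
Definition elt := option word.

Definition is_fac (w u : word) : bool := infix u w.

Definition in_univ (w : word) (x : elt) : bool :=
  if x is Some u then is_fac w u else true.

Definition Rcat (x y z : elt) : bool :=
  match x, y, z with
  | Some x, Some y, Some z => x == y ++ z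
  | _, _, _ => false
  end.

Definition consts (w : word) : seq elt :=
  Some [::] :: [seq (if a \in w then Some [:: a] else None) | a <- enum Sigma].

Definition partial_iso (w v : word) (a b : seq elt) : Prop :=
  let A := a ++ consts w in
  let B := b ++ consts v in
  size a = size b /\
  (forall i c, i < size A -> c < size (consts w) ->
     (nth None A i == nth None (consts w) c) = (nth None B i == nth None (consts v) c)) /\
  (forall i j, i < size A -> j < size A ->
     (nth None A i == nth None A j) = (nth None B i == nth None B j)) /\
  (forall i j l, i < size A -> j < size A -> l < size A ->
     Rcat (nth None A i) (nth None A j) (nth None A l)
     = Rcat (nth None B i) (nth None B j) (nth None B l)).

Fixpoint dup_wins (w v : word) (k : nat) (a b : seq elt) : Prop :=
  match k with
  | 0 => partial_iso w v a b
  | k'.+1 =>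
      (forall x, in_univ w x ->
         exists2 y, in_univ v y & dup_wins w v k' (rcons a x) (rcons b y)) /\
      (forall y, in_univ v y ->
         exists2 x, in_univ w x & dup_wins w v k' (rcons a x) (rcons b y))
  end.

Definition ef_equiv (k : nat) (w v : word) : Prop := dup_wins w v k [::] [::].

End FactorStructures.

From mathcomp Require Import all_boot.
Set Implicit Arguments. Unset Strict Implicit. Unset Printing Implicit Defensive.

(* Duplicator plays on w1 w2 by splitting every move into a part in w1 and a
   part in w2 and answering each part in its component game; the invariant
   [glued] records this (Composition).  Common factors are short, so with
   r+2 rounds left they are answered by themselves in both components, which
   makes the glued answers respect concatenation (glued_cat) and keeps the
   answers of one-sided moves one-sided (answer_forth). *)

Section Words.
Variable T : eqType.
Implicit Types (x y a b u v : seq T).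

Lemma mem_tail (z a : T) (s : seq T) : z \in s -> z \in a :: s.
Proof. by move=> h; rewrite inE h orbT. Qed.

Lemma cat_overlap x y a b : x ++ y = a ++ b ->
  (exists t, a = x ++ t /\ y = t ++ b) \/ (exists t, x = a ++ t /\ b = t ++ y).
Proof.
elim: x a => [|c x IH] a e; first by left; exists a.
case: a e => [|d a] /= e; first by right; exists (c :: x).
case: e => -> /IH [[t [-> ->]] | [t [-> ->]]]; [left | right]; by exists t.
Qed.

Lemma infix_extend u v : infix u v -> u != v ->
  exists c, infix (rcons u c) v || infix (c :: u) v.
Proof.
case/infixP => [s [s' ev]] nuv; case: s' ev => [|c s'] ev.
  case/lastP: s ev => [|s c] ev; first by rewrite ev /= cats0 eqxx in nuv.
  exists c; apply/orP; right; apply/infixP; exists s, [::].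
  by rewrite ev -cats1 -!catA.
exists c; apply/orP; left; apply/infixP; exists s, s'.
by rewrite ev cat_rcons.
Qed.

Lemma infix_cat_straddle (w1 w2 : seq T) u :
  infix u (w1 ++ w2) -> ~~ infix u w1 -> ~~ infix u w2 ->
  exists x y p s, [/\ u = x ++ y, w1 = p ++ x & w2 = y ++ s].
Proof.
case/infixP => [p [s e]] n1 n2.
case: (cat_overlap e) => [[t [_ e2]] | [t [e1 /esym e2]]].
  by move: n2; rewrite e2 infix_infix.
case: (cat_overlap e2) => [[y [eu ew2]] | [t' [et _]]]; first by exists t, y, p, s.
by move: n1; rewrite e1 et infix_infix.
Qed.

End Words.

Section Game.
Variable Sigma : finType.
Notation word := (seq Sigma).
Notation position := (seq (option word * option word)).
Implicit Types (w v u : word) (P Q : position).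

(* A position records every pair of elements matched so far, including the
   interpretations of the constants. *)
Definition respects_cat P : Prop :=
  forall p1 q1 p2 q2 p3 q3, (p1, q1) \in P -> (p2, q2) \in P -> (p3, q3) \in P ->
  Rcat p1 p2 p3 = Rcat q1 q2 q3.

Fixpoint wins w v n P : Prop :=
  match n with
  | 0 => respects_cat P
  | n'.+1 =>
      (forall x, in_univ w x -> exists2 y, in_univ v y & wins w v n' ((x, y) :: P)) /\
      (forall y, in_univ v y -> exists2 x, in_univ w x & wins w v n' ((x, y) :: P))
  end.

Lemma respects_cat_sub P Q : {subset P <= Q} -> respects_cat Q -> respects_cat P.
Proof. by move=> sPQ HQ p1 q1 p2 q2 p3 q3 /sPQ h1 /sPQ h2 /sPQ h3; apply: HQ. Qed.

Lemma wins_eq_mem w v n P Q : P =i Q -> wins w v n P -> wins w v n Q.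
Proof.
elim: n P Q => [|n IH] P Q ePQ /=; first by apply: respects_cat_sub => x; rewrite ePQ.
case=> [Hf Hb]; split.
  by move=> x /Hf [y Hy Hw]; exists y => //; apply: IH Hw => z; rewrite !inE ePQ.
by move=> y /Hb [x Hx Hw]; exists x => //; apply: IH Hw => z; rewrite !inE ePQ.
Qed.

Definition swap (pq : option word * option word) := (pq.2, pq.1).

Lemma mem_swap P a b : ((a, b) \in map swap P) = ((b, a) \in P).
Proof.
have -> : (a, b) = swap (b, a) by [].
by rewrite mem_map // => [[? ?] [? ?]] [-> ->].
Qed.

Lemma map_swapK P : map swap (map swap P) = P.
Proof. by elim: P => [|[p q] P IH] //=; rewrite IH. Qed.

Lemma wins_swap w v n P : wins w v n P -> wins v w n (map swap P).
Proof.
elim: n w v P => [|n IH] w v P /=.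
  by move=> H p1 q1 p2 q2 p3 q3; rewrite !mem_swap => h1 h2 h3; symmetry; apply: H.
case=> [Hf Hb]; split.
  by move=> y /Hb [x Hx Hw]; exists x => //; apply: (IH _ _ _ Hw).
by move=> x /Hf [y Hy Hw]; exists y => //; apply: (IH _ _ _ Hw).
Qed.

Definition const_pairs w v := zip (consts w) (consts v).

Lemma size_consts w : size (consts w) = (size (enum Sigma)).+1.
Proof. by rewrite /= size_map. Qed.

Lemma const_pairsE w v : const_pairs w v = (Some [::], Some [::]) ::
  [seq ((if c \in w then Some [:: c] else None), (if c \in v then Some [:: c] else None))
  | c <- enum Sigma].
Proof. by rewrite /const_pairs /consts /= zip_map. Qed.

Lemma const_pairs_swap w v : const_pairs v w = map swap (const_pairs w v).
Proof. by rewrite !const_pairsE /= -map_comp. Qed.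

(* Equality is definable from concatenation with the empty word; this is why
   respecting concatenation is all a partial isomorphism has to check. *)
Lemma eq_via_cat (x y : option word) :
  (x == y) = Rcat x y (Some [::]) || (~~ Rcat x x (Some [::]) && ~~ Rcat y y (Some [::])).
Proof. by case: x y => [a|] [b|] //=; rewrite !cats0 ?eqxx ?orbF. Qed.

Lemma respects_cat_eq P p1 q1 p2 q2 : respects_cat P -> (Some [::], Some [::]) \in P ->
  (p1, q1) \in P -> (p2, q2) \in P -> (p1 == p2) = (q1 == q2).
Proof.
move=> H he h1 h2.
by rewrite !eq_via_cat (H _ _ _ _ _ _ h1 h2 he) (H _ _ _ _ _ _ h1 h1 he) (H _ _ _ _ _ _ h2 h2 he).
Qed.

Lemma mem_zip_nth (A B : seq (option word)) p q : size A = size B -> (p, q) \in zip A B ->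
  exists2 i, i < size A & p = nth None A i /\ q = nth None B i.
Proof.
move=> hs /(nthP (None, None)) [i]; rewrite size_zip hs minnn => hi.
by rewrite nth_zip // => [[<- <-]]; exists i; rewrite ?hs.
Qed.

Lemma nth_mem_zip (A B : seq (option word)) i : size A = size B -> i < size A ->
  (nth None A i, nth None B i) \in zip A B.
Proof. by move=> hs hi; rewrite -nth_zip //; apply: mem_nth; rewrite size_zip -hs minnn. Qed.

Lemma partial_iso_respects_cat w v a b : size a = size b ->
  partial_iso w v a b <-> respects_cat (zip (a ++ consts w) (b ++ consts v)).
Proof.
move=> hs; set A := a ++ consts w; set B := b ++ consts v.
have hAB : size A = size B by rewrite !size_cat hs !size_consts.
rewrite /partial_iso; cbv zeta; split.
  case=> _ [_ [_ Hcat]] p1 q1 p2 q2 p3 q3.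
  move=> /(mem_zip_nth hAB) [i hi [-> ->]] /(mem_zip_nth hAB) [j hj [-> ->]].
  by move=> /(mem_zip_nth hAB) [l hl [-> ->]]; apply: Hcat.
move=> H.
have nthA c : nth None A (size a + c) = nth None (consts w) c.
  by rewrite nth_cat ltnNge leq_addr /= addKn.
have nthB c : nth None B (size a + c) = nth None (consts v) c.
  by rewrite nth_cat hs ltnNge leq_addr /= addKn.
have inAB i : i < size A -> (nth None A i, nth None B i) \in zip A B.
  exact: nth_mem_zip.
have he : (Some [::], Some [::]) \in zip A B.
  have := inAB (size a + 0); rewrite nthA nthB; apply.
  by rewrite size_cat size_consts ltn_add2l.
split => //; split; [|split].
- move=> i c hi hc; rewrite -nthA -nthB; apply: (respects_cat_eq H he); apply: inAB => //.
  by rewrite size_cat ltn_add2l.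
- by move=> i j hi hj; apply: (respects_cat_eq H he); apply: inAB.
- by move=> i j l hi hj hl; apply: H; apply: inAB.
Qed.

Lemma dup_wins_wins w v n a b : size a = size b ->
  dup_wins w v n a b <-> wins w v n (zip (a ++ consts w) (b ++ consts v)).
Proof.
elim: n a b => [|n IH] a b hs; first exact: partial_iso_respects_cat.
have hs1 x y : size (rcons a x) = size (rcons b y) by rewrite !size_rcons hs.
have eZ x y : zip (rcons a x ++ consts w) (rcons b y ++ consts v)
    =i (x, y) :: zip (a ++ consts w) (b ++ consts v).
  move=> z; rewrite -!cats1 -!catA !zip_cat //= !mem_cat !inE.
  by rewrite !mem_cat !inE orbCA.
have eZ' x y : (x, y) :: zip (a ++ consts w) (b ++ consts v)
    =i zip (rcons a x ++ consts w) (rcons b y ++ consts v).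
  by move=> z; rewrite eZ.
split; case=> Hf Hb; split.
- move=> x /Hf [y hy /IH hd]; exists y => //.
  exact: wins_eq_mem (eZ x y) (hd (hs1 x y)).
- move=> y /Hb [x hx /IH hd]; exists x => //.
  exact: wins_eq_mem (eZ x y) (hd (hs1 x y)).
- move=> x /Hf [y hy hd]; exists y => //.
  by apply/IH => //; apply: wins_eq_mem (eZ' x y) hd.
- move=> y /Hb [x hx hd]; exists x => //.
  by apply/IH => //; apply: wins_eq_mem (eZ' x y) hd.
Qed.

Lemma ef_equiv_wins n w v : ef_equiv n w v <-> wins w v n (const_pairs w v).
Proof. exact: (@dup_wins_wins w v n [::] [::]). Qed.

End Game.
Arguments swap {Sigma}.

Section Winning.
Variable Sigma : finType.
Notation word := (seq Sigma).
Notation position := (seq (option word * option word)).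
Implicit Types (w v u : word) (P Q : position).

Definition legal w v P :=
  (forall p q, (p, q) \in P -> in_univ w p /\ in_univ v q) /\ {subset const_pairs w v <= P}.

Definition winning w v n P := legal w v P /\ wins w v n P.

Lemma legal_const_pairs w v : legal w v (const_pairs w v).
Proof.
split => // p q; rewrite const_pairsE inE => /orP [/eqP [-> ->] | /mapP [c _ [-> ->]]].
  by split; apply: infix0s.
by split; case: ifP => //= h; rewrite /is_fac infix1s.
Qed.

Lemma legal_cons w v P x y : legal w v P -> in_univ w x -> in_univ v y ->
  legal w v ((x, y) :: P).
Proof.
case=> [H1 H2] hx hy; split; last by move=> z /H2; apply: mem_tail.
by move=> p q; rewrite inE => /orP [/eqP [-> ->] | /H1].
Qed.

Lemma winning_swap w v n P : winning w v n P -> winning v w n (map swap P).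
Proof.
case=> [[Huniv Hconst] HW]; split; last exact: wins_swap.
split; first by move=> p q; rewrite mem_swap => /Huniv [].
rewrite const_pairs_swap => _ /mapP [pq /Hconst hpq ->].
by case: pq hpq => p q h; rewrite mem_swap.
Qed.

(* Whatever rounds remain, the matching so far already respects
   concatenation: Spoiler may let the game end by picking bottom. *)
Lemma winning_respects_cat w v n P : winning w v n P -> respects_cat P.
Proof.
elim: n P => [|n IH] P [HL /= HW] //.
case: HW => [Hf _]; case: (Hf None isT) => y hy hw.
apply: (@respects_cat_sub _ _ ((None, y) :: P)); first by move=> z; apply: mem_tail.
by apply: IH; split => //; apply: legal_cons.
Qed.

Section Facts.
Variables (w v : word) (n : nat) (P : position).
Hypothesis HW : winning w v n P.

Lemma eps_matched : (Some [::], Some [::]) \in P.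
Proof. by case: HW => [[_ H] _]; apply: H; rewrite const_pairsE mem_head. Qed.

Lemma matched_fac_l u q : (Some u, q) \in P -> is_fac w u.
Proof. by case: HW => [[H _] _] /H []. Qed.

Lemma matched_fac_r p u : (p, Some u) \in P -> is_fac v u.
Proof. by case: HW => [[H _] _] /H []. Qed.

Lemma matched_some u q : (Some u, q) \in P -> exists u', q = Some u'.
Proof.
move=> h; have := winning_respects_cat HW h h eps_matched; rewrite /= cats0 eqxx.
by case: q h => [u'|] //; exists u'.
Qed.

Lemma letter_matched_pair c :
  ((if c \in w then Some [:: c] else None), (if c \in v then Some [:: c] else None)) \in P.
Proof.
case: HW => [[_ H] _]; apply: H; rewrite const_pairsE inE; apply/orP; right.
by apply/mapP; exists c; rewrite ?mem_enum.
Qed.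

Lemma mem_letter c : (c \in w) = (c \in v).
Proof.
have h := letter_matched_pair c.
have := winning_respects_cat HW h h eps_matched.
by case: (c \in w); case: (c \in v) => //=; rewrite eqxx.
Qed.

Lemma letter_matched c : c \in w -> (Some [:: c], Some [:: c]) \in P.
Proof. by move=> hc; have := letter_matched_pair c; rewrite -mem_letter hc. Qed.

Lemma cat_matched a1 a2 a3 q1 b2 b3 :
  (Some a1, q1) \in P -> (Some a2, Some b2) \in P -> (Some a3, Some b3) \in P ->
  a1 = a2 ++ a3 -> q1 = Some (b2 ++ b3).
Proof.
move=> h1 h2 h3 e; have := winning_respects_cat HW h1 h2 h3; rewrite /= e eqxx.
by case: q1 {h1} => // b /esym /eqP ->.
Qed.

End Facts.

Lemma play_factor w v n P u : winning w v n.+1 P -> is_fac w u ->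
  exists2 u', is_fac v u' & winning w v n ((Some u, Some u') :: P).
Proof.
case=> [HL [Hf _]] hu; case: (Hf (Some u) hu) => y hy hw.
have HW : winning w v n ((Some u, y) :: P) by split => //; apply: legal_cons.
by case: (matched_some HW (mem_head _ _)) => u' ey; subst y; exists u'.
Qed.

Lemma play_factor_r w v n P u' : winning w v n.+1 P -> is_fac v u' ->
  exists2 u, is_fac w u & winning w v n ((Some u, Some u') :: P).
Proof.
move=> /winning_swap HW hu; case: (play_factor HW hu) => u hu' /winning_swap HW'.
by exists u => //; rewrite /= map_swapK in HW'.
Qed.

Lemma play_bottom w v n P : winning w v n.+1 P -> exists y, winning w v n ((None, y) :: P).
Proof.
case=> [HL [Hf _]]; case: (Hf None isT) => y hy hw.
by exists y; split => //; apply: legal_cons.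
Qed.

(* A word of length at most n+1 must be matched with itself when n rounds
   remain: its first letter is a constant, and Spoiler can pick the rest. *)
Lemma short_matched w v n P u q : winning w v n P -> (Some u, q) \in P ->
  size u <= n.+1 -> q = Some u.
Proof.
elim: u n P q => [|c u IH] n P q HW hq hs.
  have he := eps_matched HW.
  by apply/eqP; rewrite -(respects_cat_eq (winning_respects_cat HW) he hq he).
have hcw : c \in w by apply: (mem_infix (matched_fac_l HW hq)); rewrite mem_head.
have hc := letter_matched HW hcw.
case: u IH hq hs => [|d u] IH hq hs.
  by apply/eqP; rewrite -(respects_cat_eq (winning_respects_cat HW) (eps_matched HW) hq hc).
case: n HW hs => [|n] HW hs //.
have hf : is_fac w (d :: u).
  by apply: infix_trans (matched_fac_l HW hq); apply: (suffix_infix [:: c]).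
case: (play_factor HW hf) => u' _ HW'.
have [eu'] := IH _ _ _ HW' (mem_head _ _) hs; subst u'.
by apply: (cat_matched HW' (mem_tail _ hq) (mem_tail _ hc) (mem_head _ _)).
Qed.

Lemma short_matched_r w v n P p u : winning w v n P -> (p, Some u) \in P ->
  size u <= n.+1 -> p = Some u.
Proof. by move=> /winning_swap HW h; apply: (short_matched HW); rewrite mem_swap. Qed.

Lemma play_short w v n P u : winning w v n.+1 P -> is_fac w u -> size u <= n.+1 ->
  winning w v n ((Some u, Some u) :: P).
Proof.
move=> HW hf hs; case: (play_factor HW hf) => u' _ HW'.
by have [e] := short_matched HW' (mem_head _ _) hs; rewrite e in HW'.
Qed.

Lemma cat_matched_r w v n P b1 b2 b3 p1 a2 a3 : winning w v n P ->
  (p1, Some b1) \in P -> (Some a2, Some b2) \in P -> (Some a3, Some b3) \in P ->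
  b1 = b2 ++ b3 -> p1 = Some (a2 ++ a3).
Proof.
by move=> /winning_swap HW h1 h2 h3; apply: (cat_matched HW); rewrite mem_swap.
Qed.

(* Splitting a matched word at a matched prefix (resp. suffix): the
   remaining part is picked by Spoiler and its answer completes the image. *)
Lemma cut_prefix w v n P a s a' x' : winning w v n.+1 P ->
  (Some (a ++ s), Some x') \in P -> (Some a, Some a') \in P ->
  exists2 s', x' = a' ++ s' & winning w v n ((Some s, Some s') :: P).
Proof.
move=> HW hx ha.
have hs : is_fac w s by apply: infix_trans (matched_fac_l HW hx); apply: suffix_infix.
case: (play_factor HW hs) => s' _ HW'; exists s' => //.
by case: (cat_matched HW' (mem_tail _ hx) (mem_tail _ ha) (mem_head _ _) erefl).
Qed.

Lemma cut_suffix w v n P s b b' y' : winning w v n.+1 P ->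
  (Some (s ++ b), Some y') \in P -> (Some b, Some b') \in P ->
  exists2 s', y' = s' ++ b' & winning w v n ((Some s, Some s') :: P).
Proof.
move=> HW hy hb.
have hs : is_fac w s by apply: infix_trans (matched_fac_l HW hy); apply: prefix_infix.
case: (play_factor HW hs) => s' _ HW'; exists s' => //.
by case: (cat_matched HW' (mem_tail _ hy) (mem_head _ _) (mem_tail _ hb) erefl).
Qed.

(* With a round left, the whole word w is matched with the whole word v: a
   shorter answer could be extended by a letter inside v, which Spoiler picks;
   its matched word would then be longer than w. *)
Lemma whole_matched w v n P q : winning w v n.+1 P -> (Some w, q) \in P -> q = Some v.
Proof.
move=> HW hq; case: (matched_some HW hq) => z ez; subst q.
have too_long z2 a2 a3 b2 b3 : is_fac v z2 -> z2 = b2 ++ b3 ->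
    size w < size (a2 ++ a3) -> (Some a2, Some b2) \in P -> (Some a3, Some b3) \in P -> False.
  move=> hz2 ez2 hs h2 h3; case: (play_factor_r HW hz2) => x hx HW'.
  have [ex] := cat_matched_r HW' (mem_head _ _) (mem_tail _ h2) (mem_tail _ h3) ez2.
  by move: (size_infix hx); rewrite ex leqNgt hs.
case: (eqVneq z v) => [-> // | nzv].
case: (infix_extend (matched_fac_r HW hq) nzv) => c /orP [] hc; exfalso.
- have hcw : c \in w by rewrite (mem_letter HW) (mem_infix hc) // mem_rcons mem_head.
  apply: (too_long _ w [:: c] z [:: c] hc (esym (cats1 z c)) _ hq (letter_matched HW hcw)).
  by rewrite size_cat addn1.
- have hcw : c \in w by rewrite (mem_letter HW) (mem_infix hc) // mem_head.
  apply: (too_long _ [:: c] w [:: c] z hc erefl _ (letter_matched HW hcw) hq).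
  by rewrite size_cat addnC addn1.
Qed.

Lemma suffix_matched w v n P p x q : winning w v n.+2 P -> (Some x, q) \in P ->
  w = p ++ x -> exists2 x', q = Some x' & exists p', v = p' ++ x'.
Proof.
move=> HW hq ew; case: (matched_some HW hq) => x' ex; subst q; exists x' => //.
case: (play_factor HW (infix_refl w)) => y _ HW1.
have [ey] := whole_matched HW1 (mem_head _ _); subst y.
have hw : (Some (p ++ x), Some v) \in (Some w, Some v) :: P by rewrite -ew mem_head.
by case: (cut_suffix HW1 hw (mem_tail _ hq)) => p' ev _; exists p'.
Qed.

Lemma prefix_matched w v n P x s q : winning w v n.+2 P -> (Some x, q) \in P ->
  w = x ++ s -> exists2 x', q = Some x' & exists s', v = x' ++ s'.
Proof.
move=> HW hq ew; case: (matched_some HW hq) => x' ex; subst q; exists x' => //.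
case: (play_factor HW (infix_refl w)) => y _ HW1.
have [ey] := whole_matched HW1 (mem_head _ _); subst y.
have hw : (Some (x ++ s), Some v) \in (Some w, Some v) :: P by rewrite -ew mem_head.
by case: (cut_prefix HW1 hw (mem_tail _ hq)) => s' ev _; exists s'.
Qed.

End Winning.

Section Composition.
Variable Sigma : finType.
Notation word := (seq Sigma).
Notation position := (seq (option word * option word)).
Variables (w1 w2 v1 v2 : word) (r : nat).
Hypothesis same_common :
  forall u, (is_fac w1 u && is_fac w2 u) = (is_fac v1 u && is_fac v2 u).
Hypothesis common_short : forall u, is_fac w1 u && is_fac w2 u -> size u <= r.

Lemma common_short_r u : is_fac v1 u -> is_fac v2 u -> size u <= r.
Proof. by move=> h1 h2; apply: common_short; rewrite same_common h1 h2. Qed.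

Lemma play_common1 n P t : r <= n -> winning w1 v1 n.+1 P -> is_fac w1 t -> is_fac w2 t ->
  winning w1 v1 n ((Some t, Some t) :: P).
Proof.
move=> hr HW h1 h2; have ht : size t <= r by apply: common_short; rewrite h1 h2.
exact: play_short HW h1 (leq_trans ht (leqW hr)).
Qed.

Lemma play_common2 n P t : r <= n -> winning w2 v2 n.+1 P -> is_fac w1 t -> is_fac w2 t ->
  winning w2 v2 n ((Some t, Some t) :: P).
Proof.
move=> hr HW h1 h2; have ht : size t <= r by apply: common_short; rewrite h1 h2.
exact: play_short HW h2 (leq_trans ht (leqW hr)).
Qed.

(* The invariant of the combined strategy: a pair (p, q) of the game on
   w1 w2, v1 v2 is glued from the component positions P1, P2 when it is
   bottom against bottom, a common factor matched with itself in both games,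
   a factor of one component only matched in that component, or a word
   straddling the boundary whose two sides are matched in their components. *)
Inductive glued (P1 P2 : position) : option word * option word -> Prop :=
| GlueBottom : glued P1 P2 (None, None)
| GlueCommon u : is_fac w1 u -> is_fac w2 u ->
    (Some u, Some u) \in P1 -> (Some u, Some u) \in P2 -> glued P1 P2 (Some u, Some u)
| GlueLeft u u' : is_fac w1 u -> ~~ is_fac w2 u -> is_fac v1 u' -> ~~ is_fac v2 u' ->
    (Some u, Some u') \in P1 -> glued P1 P2 (Some u, Some u')
| GlueRight u u' : ~~ is_fac w1 u -> is_fac w2 u -> ~~ is_fac v1 u' -> is_fac v2 u' ->
    (Some u, Some u') \in P2 -> glued P1 P2 (Some u, Some u')
| GlueStraddle x y x' y' : ~~ is_fac w1 (x ++ y) -> ~~ is_fac w2 (x ++ y) ->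
    ~~ is_fac v1 (x' ++ y') -> ~~ is_fac v2 (x' ++ y') ->
    (Some x, Some x') \in P1 -> (Some y, Some y') \in P2 ->
    glued P1 P2 (Some (x ++ y), Some (x' ++ y')).

Lemma glued_mono P1 P2 Q1 Q2 pq : {subset P1 <= Q1} -> {subset P2 <= Q2} ->
  glued P1 P2 pq -> glued Q1 Q2 pq.
Proof.
move=> s1 s2; case=> *.
- exact: GlueBottom.
- by apply: GlueCommon => //; [apply: s1 | apply: s2].
- by apply: GlueLeft => //; apply: s1.
- by apply: GlueRight => //; apply: s2.
- by apply: GlueStraddle => //; [apply: s1 | apply: s2].
Qed.

Lemma glued_in1 P1 P2 pq u : glued P1 P2 pq -> pq.1 = Some u -> is_fac w1 u -> pq \in P1.
Proof.
case=> [|? ? ? ? ?|? ? ? ? ? ? ?|? ? h ? ? ? ?|? ? ? ? h ? ? ? ? ?] //= [<-] hw.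
all: by rewrite hw in h.
Qed.

Lemma glued_in2 P1 P2 pq u : glued P1 P2 pq -> pq.1 = Some u -> is_fac w2 u -> pq \in P2.
Proof.
case=> [|? ? ? ? ?|? ? ? h ? ? ?|? ? ? ? ? ? ?|? ? ? ? ? h ? ? ? ?] //= [<-] hw.
all: by rewrite hw in h.
Qed.

Lemma glued_split P1 P2 pq u :
  (Some [::], Some [::]) \in P1 -> (Some [::], Some [::]) \in P2 ->
  glued P1 P2 pq -> pq.1 = Some u ->
  exists x y x' y', [/\ u = x ++ y, pq.2 = Some (x' ++ y'),
    (Some x, Some x') \in P1 & (Some y, Some y') \in P2].
Proof.
move=> e1 e2 [|u0 _ _ m _|u0 u' _ _ _ _ m|u0 u' _ _ _ _ m|x y x' y' _ _ _ _ m1 m2] //= [<-].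
- by exists u0, [::], u0, [::]; rewrite !cats0.
- by exists u0, [::], u', [::]; rewrite !cats0.
- by exists [::], u0, [::], u'.
- by exists x, y, x', y'.
Qed.

(* The
   middle parts of s y1 = x3 y3 overlap in a common factor t, which both
   games answer by itself; this pins down all the images. *)
Lemma cat_cut_left P1 P2 a s y1 x1' y1' a' x3 y3 x3' y3' :
  winning w1 v1 r.+2 P1 -> winning w2 v2 r.+2 P2 ->
  (Some (a ++ s), Some x1') \in P1 -> (Some y1, Some y1') \in P2 ->
  (Some a, Some a') \in P1 -> (Some x3, Some x3') \in P1 -> (Some y3, Some y3') \in P2 ->
  s ++ y1 = x3 ++ y3 -> x1' ++ y1' = a' ++ (x3' ++ y3').
Proof.
move=> W1 W2 m1 n1 ma m3 n3 es.
case: (cut_prefix W1 m1 ma) => s' -> W1a.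
have ms : (Some s, Some s') \in (Some s, Some s') :: P1 := mem_head _ _.
have fs := matched_fac_l W1a ms; have fy1 := matched_fac_l W2 n1.
have fx3 := matched_fac_l W1 m3; have fy3 := matched_fac_l W2 n3.
case: (cat_overlap es) => [[t [ex3 ey1]] | [t [es3 ey3]]].
- have ft1 : is_fac w1 t by apply: infix_trans fx3; rewrite ex3 suffix_infix.
  have ft2 : is_fac w2 t by apply: infix_trans fy1; rewrite ey1 prefix_infix.
  have W1b := play_common1 (leqnn r) W1a ft1 ft2.
  have [->] := cat_matched W1b (mem_tail _ (mem_tail _ m3)) (mem_tail _ ms) (mem_head _ _) ex3.
  have W2b := play_common2 (leqnSn r) W2 ft1 ft2.
  have [->] := cat_matched W2b (mem_tail _ n1) (mem_head _ _) (mem_tail _ n3) ey1.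
  by rewrite !catA.
- have ft1 : is_fac w1 t by apply: infix_trans fs; rewrite es3 suffix_infix.
  have ft2 : is_fac w2 t by apply: infix_trans fy3; rewrite ey3 prefix_infix.
  have W1b := play_common1 (leqnn r) W1a ft1 ft2.
  have [->] := cat_matched W1b (mem_tail _ ms) (mem_tail _ (mem_tail _ m3)) (mem_head _ _) es3.
  have W2b := play_common2 (leqnSn r) W2 ft1 ft2.
  have [->] := cat_matched W2b (mem_tail _ n3) (mem_head _ _) (mem_tail _ n1) ey3.
  by rewrite !catA.
Qed.

Lemma cat_cut_right P1 P2 x1 s b x1' y1' b' x2 y2 x2' y2' :
  winning w1 v1 r.+2 P1 -> winning w2 v2 r.+2 P2 ->
  (Some x1, Some x1') \in P1 -> (Some (s ++ b), Some y1') \in P2 ->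
  (Some b, Some b') \in P2 -> (Some x2, Some x2') \in P1 -> (Some y2, Some y2') \in P2 ->
  x1 ++ s = x2 ++ y2 -> x1' ++ y1' = (x2' ++ y2') ++ b'.
Proof.
move=> W1 W2 m1 n1 nb m2 n2 es.
case: (cut_suffix W2 n1 nb) => s' -> W2a.
have ms : (Some s, Some s') \in (Some s, Some s') :: P2 := mem_head _ _.
have fs := matched_fac_l W2a ms; have fx1 := matched_fac_l W1 m1.
have fx2 := matched_fac_l W1 m2; have fy2 := matched_fac_l W2 n2.
case: (cat_overlap es) => [[t [ex2 es2]] | [t [ex1 ey2]]].
- have ft1 : is_fac w1 t by apply: infix_trans fx2; rewrite ex2 suffix_infix.
  have ft2 : is_fac w2 t by apply: infix_trans fs; rewrite es2 prefix_infix.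
  have W1b := play_common1 (leqnSn r) W1 ft1 ft2.
  have [->] := cat_matched W1b (mem_tail _ m2) (mem_tail _ m1) (mem_head _ _) ex2.
  have W2b := play_common2 (leqnn r) W2a ft1 ft2.
  have [->] := cat_matched W2b (mem_tail _ ms) (mem_head _ _) (mem_tail _ (mem_tail _ n2)) es2.
  by rewrite !catA.
- have ft1 : is_fac w1 t by apply: infix_trans fx1; rewrite ex1 suffix_infix.
  have ft2 : is_fac w2 t by apply: infix_trans fy2; rewrite ey2 prefix_infix.
  have W1b := play_common1 (leqnSn r) W1 ft1 ft2.
  have [->] := cat_matched W1b (mem_tail _ m1) (mem_tail _ m2) (mem_head _ _) ex1.
  have W2b := play_common2 (leqnn r) W2a ft1 ft2.
  have [->] := cat_matched W2b (mem_tail _ (mem_tail _ n2)) (mem_head _ _) (mem_tail _ ms) ey2.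
  by rewrite !catA.
Qed.

Lemma glued_cat P1 P2 p1 q1 p2 q2 p3 q3 :
  winning w1 v1 r.+2 P1 -> winning w2 v2 r.+2 P2 ->
  glued P1 P2 (p1, q1) -> glued P1 P2 (p2, q2) -> glued P1 P2 (p3, q3) ->
  Rcat p1 p2 p3 -> Rcat q1 q2 q3.
Proof.
move=> W1 W2 t1 t2 t3.
case: p1 t1 => [u|] t1 //; case: p2 t2 => [a|] t2 //; case: p3 t3 => [b|] t3 //= /eqP eu.
have split := glued_split (eps_matched W1) (eps_matched W2).
case: (split _ _ t1 erefl) => x1 [y1 [x1' [y1' [exy /= -> m1 n1]]]].
have fx1 := matched_fac_l W1 m1; have fy1 := matched_fac_l W2 n1.
case: (cat_overlap (etrans (esym exy) eu)) => [[s [ea ey1]] | [s [ex1 eb]]].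
- have fb : is_fac w2 b by apply: infix_trans fy1; rewrite ey1 suffix_infix.
  have nb := glued_in2 t3 erefl fb.
  case: (matched_some W2 nb) => b' eb'; rewrite /= eb' in nb *.
  case: (split _ _ t2 erefl) => x2 [y2 [x2' [y2' [exy2 /= -> m2 n2]]]].
  rewrite ey1 in n1; apply/eqP.
  exact: cat_cut_right W1 W2 m1 n1 nb m2 n2 (etrans (esym ea) exy2).
- have fa : is_fac w1 a by apply: infix_trans fx1; rewrite ex1 prefix_infix.
  have ma := glued_in1 t2 erefl fa.
  case: (matched_some W1 ma) => a' ea'; rewrite /= ea' in ma *.
  case: (split _ _ t3 erefl) => x3 [y3 [x3' [y3' [exy3 /= -> m3 n3]]]].
  rewrite ex1 in m1; apply/eqP.
  exact: cat_cut_left W1 W2 m1 n1 ma m3 n3 (etrans (esym eb) exy3).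
Qed.

Definition answers n P1 P2 (xy : option word * option word) :=
  exists p1 p2, [/\ winning w1 v1 n (p1 :: P1), winning w2 v2 n (p2 :: P2)
                 & glued (p1 :: P1) (p2 :: P2) xy].

Lemma answer_common n P1 P2 u : r <= n ->
  winning w1 v1 n.+1 P1 -> winning w2 v2 n.+1 P2 -> is_fac w1 u -> is_fac w2 u ->
  answers n P1 P2 (Some u, Some u).
Proof.
move=> hr W1 W2 h1 h2; exists (Some u, Some u), (Some u, Some u); split.
- exact: play_common1.
- exact: play_common2.
- by apply: GlueCommon => //; apply: mem_head.
Qed.

(* A factor of w1 only is answered in the first game; the answer is no factor
   of v2, since it would then be a short common factor, equal to u. *)
Lemma answer_left n P1 P2 u : r <= n ->
  winning w1 v1 n.+1 P1 -> winning w2 v2 n.+1 P2 -> is_fac w1 u -> ~~ is_fac w2 u ->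
  exists2 u', is_fac v1 u' & answers n P1 P2 (Some u, Some u').
Proof.
move=> hr W1 W2 h1 h2.
case: (play_factor W1 h1) => u' hu' W1'; case: (play_bottom W2) => y W2'.
have nv2 : ~~ is_fac v2 u'.
  apply/negP => hv2; have hs := common_short_r hu' hv2.
  have [eu] := short_matched_r W1' (mem_head _ _) (leq_trans hs (leqW hr)); subst u'.
  by move: (same_common u); rewrite hu' hv2 (negbTE h2) andbF.
exists u' => //; exists (Some u, Some u'), (None, y); split => //.
by apply: GlueLeft => //; apply: mem_head.
Qed.

Lemma answer_right n P1 P2 u : r <= n ->
  winning w1 v1 n.+1 P1 -> winning w2 v2 n.+1 P2 -> ~~ is_fac w1 u -> is_fac w2 u ->
  exists2 u', is_fac v2 u' & answers n P1 P2 (Some u, Some u').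
Proof.
move=> hr W1 W2 h1 h2.
case: (play_bottom W1) => y W1'; case: (play_factor W2 h2) => u' hu' W2'.
have nv1 : ~~ is_fac v1 u'.
  apply/negP => hv1; have hs := common_short_r hv1 hu'.
  have [eu] := short_matched_r W2' (mem_head _ _) (leq_trans hs (leqW hr)); subst u'.
  by move: (same_common u); rewrite hu' hv1 (negbTE h1).
exists u' => //; exists (None, y), (Some u, Some u'); split => //.
by apply: GlueRight => //; apply: mem_head.
Qed.

(* For a straddling move x y answered piecewise by x' y', where y' is a
   prefix of v2: if x' y' were a factor of v1, then y' would be a short common
   factor, equal to y, and the answer to x' y' in the first game would be
   x y, a factor of w1. *)
Lemma straddle_not_fac1 n P1 P2 x y x' y' s' : r <= n ->
  winning w1 v1 n.+2 ((Some x, Some x') :: P1) -> winning w2 v2 n.+2 ((Some y, Some y') :: P2) ->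
  v2 = y' ++ s' -> ~~ is_fac w1 (x ++ y) -> ~~ is_fac v1 (x' ++ y').
Proof.
move=> hr W1 W2 ev2 nxy; apply/negP => hv.
have hy1 : is_fac v1 y' by apply: infix_trans hv; apply: suffix_infix.
have hy2 : is_fac v2 y' by rewrite ev2 /is_fac prefix_infix.
have hs := common_short_r hy1 hy2.
have [ey] := short_matched_r W2 (mem_head _ _) (leq_trans hs (leqW (leqW (leqW hr)))).
subst y'; have /andP [hw1 hw2] : is_fac w1 y && is_fac w2 y by rewrite same_common hy1 hy2.
case: (play_factor_r W1 hv) => z hz W1a.
have W1b := play_common1 hr W1a hw1 hw2.
have [ez] := cat_matched_r W1b (mem_tail _ (mem_head _ _))
  (mem_tail _ (mem_tail _ (mem_head _ _))) (mem_head _ _) erefl.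
by move: hz; rewrite ez (negbTE nxy).
Qed.

Lemma straddle_not_fac2 n P1 P2 x y x' y' p' : r <= n ->
  winning w1 v1 n.+2 ((Some x, Some x') :: P1) -> winning w2 v2 n.+2 ((Some y, Some y') :: P2) ->
  v1 = p' ++ x' -> ~~ is_fac w2 (x ++ y) -> ~~ is_fac v2 (x' ++ y').
Proof.
move=> hr W1 W2 ev1 nxy; apply/negP => hv.
have hx1 : is_fac v1 x' by rewrite ev1 /is_fac suffix_infix.
have hx2 : is_fac v2 x' by apply: infix_trans hv; apply: prefix_infix.
have hs := common_short_r hx1 hx2.
have [ex] := short_matched_r W1 (mem_head _ _) (leq_trans hs (leqW (leqW (leqW hr)))).
subst x'; have /andP [hw1 hw2] : is_fac w1 x && is_fac w2 x by rewrite same_common hx1 hx2.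
case: (play_factor_r W2 hv) => z hz W2a.
have W2b := play_common2 hr W2a hw1 hw2.
have [ez] := cat_matched_r W2b (mem_tail _ (mem_head _ _)) (mem_head _ _)
  (mem_tail _ (mem_tail _ (mem_head _ _))) erefl.
by move: hz; rewrite ez (negbTE nxy).
Qed.

(* A straddling move x y (x a suffix of w1, y a prefix of w2) is answered by
   x' y', where x' and y' answer x and y; they are a suffix of v1 and a prefix
   of v2, so x' y' is a factor of v1 v2 lying in neither v1 nor v2. *)
Lemma answer_straddle n P1 P2 x y p s : r <= n ->
  winning w1 v1 n.+3 P1 -> winning w2 v2 n.+3 P2 -> w1 = p ++ x -> w2 = y ++ s ->
  ~~ is_fac w1 (x ++ y) -> ~~ is_fac w2 (x ++ y) ->
  exists2 u', is_fac (v1 ++ v2) u' & answers n.+2 P1 P2 (Some (x ++ y), Some u').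
Proof.
move=> hr W1 W2 ew1 ew2 n1 n2.
have hx : is_fac w1 x by rewrite ew1 /is_fac suffix_infix.
have hy : is_fac w2 y by rewrite ew2 /is_fac prefix_infix.
case: (play_factor W1 hx) => x' _ W1'; case: (play_factor W2 hy) => y' _ W2'.
case: (suffix_matched W1' (mem_head _ _) ew1) => _ [<-] [p' ev1].
case: (prefix_matched W2' (mem_head _ _) ew2) => _ [<-] [s' ev2].
exists (x' ++ y'); first by rewrite /is_fac ev1 ev2 -catA (catA x') infix_infix.
exists (Some x, Some x'), (Some y, Some y'); split => //.
apply: GlueStraddle; rewrite ?mem_head //.
- exact: straddle_not_fac1 hr W1' W2' ev2 n1.
- exact: straddle_not_fac2 hr W1' W2' ev1 n2.
Qed.

Lemma answer_forth n P1 P2 x : r.+2 <= n ->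
  winning w1 v1 n.+1 P1 -> winning w2 v2 n.+1 P2 -> in_univ (w1 ++ w2) x ->
  exists2 y, in_univ (v1 ++ v2) y & answers n P1 P2 (x, y).
Proof.
case: n => [|[|n]] //; rewrite !ltnS => hr W1 W2.
have hr2 : r <= n.+2 by rewrite (leq_trans hr) // !leqW.
case: x => [u|] hu; last first.
  case: (play_bottom W1) => y1 W1'; case: (play_bottom W2) => y2 W2'.
  by exists None => //; exists (None, y1), (None, y2); split => //; apply: GlueBottom.
case h1: (is_fac w1 u); case h2: (is_fac w2 u).
- have /andP [hv1 _] : is_fac v1 u && is_fac v2 u by rewrite -same_common h1 h2.
  by exists (Some u); [apply: infix_catr | apply: answer_common].
- case: (answer_left hr2 W1 W2 h1 (negbT h2)) => u' hu' ans.
  by exists (Some u') => //; apply: infix_catr.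
- case: (answer_right hr2 W1 W2 (negbT h1) h2) => u' hu' ans.
  by exists (Some u') => //; apply: infix_catl.
- case: (infix_cat_straddle hu (negbT h1) (negbT h2)) => x [y [p [s [eu ew1 ew2]]]].
  rewrite eu in h1 h2 *.
  case: (answer_straddle hr W1 W2 ew1 ew2 (negbT h1) (negbT h2)) => u' hu' ans.
  by exists (Some u').
Qed.

Lemma glued_consts n1 n2 P1 P2 pq : winning w1 v1 n1 P1 -> winning w2 v2 n2 P2 ->
  pq \in const_pairs (w1 ++ w2) (v1 ++ v2) -> glued P1 P2 pq.
Proof.
move=> W1 W2; rewrite const_pairsE inE => /orP [/eqP -> | /mapP [c _ ->]].
  by apply: GlueCommon; rewrite ?(eps_matched W1) ?(eps_matched W2) //; apply: infix0s.
have [lv1 lv2] := (mem_letter W1 c, mem_letter W2 c).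
have fac1 u : is_fac u [:: c] = (c \in u) by rewrite /is_fac infix1s.
rewrite !mem_cat -lv1 -lv2; case h1: (c \in w1); case h2: (c \in w2) => /=.
- by apply: GlueCommon; rewrite ?fac1 ?(letter_matched W1 h1) ?(letter_matched W2 h2).
- by apply: GlueLeft; rewrite ?fac1 -?lv1 -?lv2 ?h1 ?h2 ?(letter_matched W1 h1).
- by apply: GlueRight; rewrite ?fac1 -?lv1 -?lv2 ?h1 ?h2 ?(letter_matched W2 h2).
- exact: GlueBottom.
Qed.

End Composition.

(* Exchanging the two sides of every game turns a glued pair into a glued
   pair; this lets Duplicator answer Spoiler's moves in v1 v2 as well. *)
Lemma glued_swap (Sigma : finType) (w1 w2 v1 v2 : seq Sigma) P1 P2 pq :
  (forall u, (is_fac w1 u && is_fac w2 u) = (is_fac v1 u && is_fac v2 u)) ->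
  glued w1 w2 v1 v2 P1 P2 pq -> glued v1 v2 w1 w2 (map swap P1) (map swap P2) (swap pq).
Proof.
move=> same; case=> /=.
- exact: GlueBottom.
- move=> u h1 h2 m1 m2; have /andP [? ?] : is_fac v1 u && is_fac v2 u by rewrite -same h1 h2.
  by apply: GlueCommon; rewrite ?mem_swap.
- by move=> u u' h1 h2 h3 h4 m; apply: GlueLeft; rewrite ?mem_swap.
- by move=> u u' h1 h2 h3 h4 m; apply: GlueRight; rewrite ?mem_swap.
- by move=> x y x' y' h1 h2 h3 h4 m1 m2; apply: GlueStraddle; rewrite ?mem_swap.
Qed.

Section Induction.
Variable Sigma : finType.
Notation word := (seq Sigma).
Notation position := (seq (option word * option word)).
Variables (w1 w2 v1 v2 : word) (r : nat).
Hypothesis same_common :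
  forall u, (is_fac w1 u && is_fac w2 u) = (is_fac v1 u && is_fac v2 u).
Hypothesis common_short : forall u, is_fac w1 u && is_fac w2 u -> size u <= r.

Let same_common_sym u : (is_fac v1 u && is_fac v2 u) = (is_fac w1 u && is_fac w2 u).
Proof. by rewrite same_common. Qed.

Let common_short_sym u : is_fac v1 u && is_fac v2 u -> size u <= r.
Proof. by rewrite -same_common; apply: common_short. Qed.

Lemma glued_wins m : forall P P1 P2,
  winning w1 v1 (m + r + 2) P1 -> winning w2 v2 (m + r + 2) P2 ->
  {in P, forall pq, glued w1 w2 v1 v2 P1 P2 pq} -> wins (w1 ++ w2) (v1 ++ v2) m P.
Proof.
elim: m => [|m IH] P P1 P2 W1 W2 T.
  rewrite add0n addn2 in W1 W2.
  move=> p1 q1 p2 q2 p3 q3 h1 h2 h3; apply/idP/idP.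
    exact: (glued_cat common_short W1 W2 (T _ h1) (T _ h2) (T _ h3)).
  have G pq (h : pq \in P) := glued_swap same_common (T _ h).
  exact: (glued_cat common_short_sym (winning_swap W1) (winning_swap W2)
    (G _ h1) (G _ h2) (G _ h3)).
rewrite !addSn in W1 W2.
have hn : r.+2 <= m + r + 2 by rewrite addn2 !ltnS leq_addl.
split.
- move=> x hx; case: (answer_forth same_common common_short hn W1 W2 hx) => y hy.
  case=> p1 [p2 [W1' W2' t]]; exists y => //.
  apply: IH W1' W2' _ => pq; rewrite inE => /orP [/eqP -> // | /T t'].
  by apply: glued_mono t' => z; apply: mem_tail.
- move=> y hy.
  have := answer_forth same_common_sym common_short_sym hn (winning_swap W1) (winning_swap W2) hy.
  case=> x hx [p1 [p2 [/winning_swap W1' /winning_swap W2' t]]]; exists x => //.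
  rewrite /= map_swapK in W1'; rewrite /= map_swapK in W2'.
  apply: IH W1' W2' _ => pq; rewrite inE => /orP [/eqP -> | /T t'].
    by have := glued_swap same_common_sym t; rewrite /= !map_swapK.
  by apply: glued_mono t' => z; apply: mem_tail.
Qed.

End Induction.

(* The initial positions are the constants, which are glued. *)
Theorem lemma4p4 (Sigma : finType) (w1 w2 v1 v2 : seq Sigma) (k r : nat) :
  (forall u : seq Sigma,
     (is_fac w1 u && is_fac w2 u) = (is_fac v1 u && is_fac v2 u)) ->
  (exists2 u : seq Sigma, is_fac w1 u && is_fac w2 u & size u = r) ->
  (forall u : seq Sigma, is_fac w1 u && is_fac w2 u -> size u <= r) ->
  1 <= k ->
  ef_equiv (k + r + 2) w1 v1 ->
  ef_equiv (k + r + 2) w2 v2 ->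
  ef_equiv k (w1 ++ w2) (v1 ++ v2).
Proof.
move=> same_common _ common_short _ /ef_equiv_wins e1 /ef_equiv_wins e2.
have W1 : winning w1 v1 (k + r + 2) (const_pairs w1 v1) by split=> //; apply: legal_const_pairs.
have W2 : winning w2 v2 (k + r + 2) (const_pairs w2 v2) by split=> //; apply: legal_const_pairs.
apply/ef_equiv_wins; apply: (glued_wins same_common common_short W1 W2) => pq.
exact: glued_consts W1 W2.
Qed.
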